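(* There exists an $HS(3,K_4^{(3)}+e;16,6)$.
   Context: $K_4^{(3)}+e$ denotes the 3-uniform hypergraph with vertex set $\{1,2,3,4,5\}$ and edge set $\{\{1,2,3\},\{1,2,4\},\{1,3,4\},\{2,3,4\},\{3,4,5\}\}$. An $HS(3,K_4^{(3)}+e;v,s)$ is a collection of hypergraphs (blocks) on subsets of a $v$-set $V$, each isomorphic to $K_4^{(3)}+e$, whose edge sets partition the set of all 3-subsets of $V$ that are not contained in a fixed $s$-subset of $V$ (the hole). *)

From mathcomp Require Import all_boot.
Set Implicit Arguments. Unset Strict Implicit. Unset Printing Implicit Defensive.

(* Vertices of K_4^(3)+e: 1..5 of the paper are 0..4 here (type 'I_5). *)
Definition triple5 (a b c : nat) : {set 'I_5} :=
  [set (inord a : 'I_5); inord b; inord c].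

Definition K4e_edges : {set {set 'I_5}} :=
  [set triple5 0 1 2; triple5 0 1 3; triple5 0 2 3; triple5 1 2 3; triple5 2 3 4].

(* A block on V = 'I_v is a copy of K_4^(3)+e, given by an injective
   embedding f of its vertex set into V; its edges are the images. *)
Definition block_edges (v : nat) (f : {ffun 'I_5 -> 'I_v}) : {set {set 'I_v}} :=
  [set f @: (e : {set 'I_5}) | e in K4e_edges].

(* B is an HS(3, K_4^(3)+e; v, s) with hole H: |H| = s, every block is an
   injective copy, and the edge sets of the blocks partition the 3-subsets
   of V not contained in H (each such triple lies in exactly one block,
   every other set lies in none). *)
Definition is_HS (v s : nat) (H : {set 'I_v}) (B : seq {ffun 'I_5 -> 'I_v}) : Prop :=
  [/\ #|H| = s,
      all (fun f : {ffun 'I_5 -> 'I_v} => injectiveb f) B &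
      forall T : {set 'I_v},
        count (fun f => T \in block_edges f) B = ((#|T| == 3) && ~~ (T \subset H))].

From mathcomp Require Import all_boot.
Set Implicit Arguments. Unset Strict Implicit. Unset Printing Implicit Defensive.

(* The design is explicit: 108 copies of K_4^(3)+e on the points 0..15 with
   hole {0,...,5}, covering 108 * 5 = 'C(16,3) - 'C(6,3) = 540 triples.  A block
   is coded by the list of images of 0..4, and a 3-set T by the increasing list
   of its elements; T is an edge of a block iff that list is a permutation of
   one of the block's five edge lists.  The partition property thus becomes a
   boolean check over the 560 increasing words of length 3, done by [vm_compute]. *)

Lemma set_seq_eqE (T : finType) (s : seq T) (A : {set T}) :
  size s = #|A| -> ([set:: s] == A) = perm_eq s (enum A).
Proof.
move=> size_s; apply/eqP/idP => [s_A | s_A].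
  have enum_s : enum A =i s by move=> x; rewrite mem_enum -s_A inE.
  have uniq_s : uniq s by rewrite (uniq_size_uniq (enum_uniq A) enum_s) size_s cardE.
  by apply: uniq_perm; rewrite ?enum_uniq // => x; rewrite enum_s.
by apply/setP => x; rewrite inE (perm_mem s_A) mem_enum.
Qed.

Lemma imset_set_seq (aT rT : finType) (f : aT -> rT) (s : seq aT) :
  f @: [set:: s] = [set:: map f s].
Proof.
apply/setP => y; rewrite inE.
by apply/imsetP/mapP => -[x x_s ->]; exists x; rewrite ?inE in x_s *.
Qed.

Fixpoint words (n k : nat) : seq (seq nat) :=
  if k is k'.+1 then [seq x :: w | x <- iota 0 n, w <- words n k'] else [:: [::]].

Lemma mem_words n k w : (w \in words n k) = (size w == k) && all (gtn n) w.
Proof.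
elim: k w => [|k IHk] [|x w] //=.
  by apply/negbTE/negP => /allpairsP[[y u] [_ _]].
rewrite -[_ == _.+1]/(size w == k) andbCA -IHk.
apply/allpairsP/andP => [[[y u] /= [y_n u_k [-> ->]]] | [x_n w_k]].
  by rewrite mem_iota in y_n.
by exists (x, w); rewrite mem_iota.
Qed.

Definition K4e_triples : seq (seq nat) :=
  [:: [:: 0; 1; 2]; [:: 0; 1; 3]; [:: 0; 2; 3]; [:: 1; 2; 3]; [:: 2; 3; 4]].

Lemma mem_K4e_edges e :
  (e \in K4e_edges) = has (fun t => e == [set:: map inord t]) K4e_triples.
Proof.
have triple5E a b c : triple5 a b c = [set:: [:: inord a; inord b; inord c]].
  by apply/setP => i; rewrite !inE orbA.
by rewrite /K4e_edges !inE !triple5E /= orbF !orbA.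
Qed.

Lemma K4e_triples_wf :
  {in K4e_triples, forall t, [&& size t == 3, uniq t & all (gtn 5) t]}.
Proof. by apply/allP. Qed.

Lemma uniq_map_inord n (t : seq nat) :
  uniq t -> all (gtn n.+1) t -> uniq (map (inord : nat -> 'I_n.+1) t).
Proof.
move=> uniq_t /allP t_n; rewrite map_inj_in_uniq // => i j /t_n i_n /t_n j_n.
by move/(congr1 val) => /=; rewrite !inordK.
Qed.

Lemma sorted_val_enum m (A : {set 'I_m}) : sorted ltn (map val (enum A)).
Proof.
rewrite -[enum _](eq_filter (mem_enum _)) -(eq_filter (mem_map val_inj _)) -filter_map.
by rewrite (sorted_filter ltn_trans) // unlock val_ord_enum iota_ltn_sorted.
Qed.

Section Blocks.
Variable n : nat.
Local Notation v := n.+1.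
Implicit Types (f : {ffun 'I_5 -> 'I_v}) (T : {set 'I_v}) (l w : seq nat).

Lemma mem_block_edges f T :
  (T \in block_edges f) = has (fun t => T == [set:: map (f \o inord) t]) K4e_triples.
Proof.
apply/imsetP/hasP => [[e e_K ->] | [t t_K /eqP ->]].
  move: e_K; rewrite mem_K4e_edges => /hasP[t t_K /eqP ->].
  by exists t; rewrite // imset_set_seq map_comp.
exists [set:: map inord t]; last by rewrite imset_set_seq map_comp.
by rewrite mem_K4e_edges; apply/hasP; exists t.
Qed.

Lemma card_block_edge f T : injective f -> T \in block_edges f -> #|T| = 3.
Proof.
move=> f_inj; rewrite mem_block_edges.
case/hasP=> t /K4e_triples_wf/and3P[/eqP size_t uniq_t t_5] /eqP ->.
by rewrite cardsE (card_uniqP _) ?size_map // map_comp map_inj_uniq ?uniq_map_inord.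
Qed.

Definition block_of l : {ffun 'I_5 -> 'I_v} := [ffun i : 'I_5 => inord (nth 0 l i)].

Definition valid_block l := [&& size l == 5, uniq l & all (gtn v) l].

Lemma block_ofE l (i : 'I_5) : valid_block l -> block_of l i = nth 0 l i :> nat.
Proof.
case/and3P=> /eqP size_l _ /allP l_v.
by rewrite ffunE inordK //; apply: l_v; rewrite mem_nth ?size_l.
Qed.

Lemma block_of_inj l : valid_block l -> injective (block_of l).
Proof.
move=> l_ok i j /(congr1 (@nat_of_ord v)); rewrite !block_ofE //.
case/and3P: l_ok => /eqP size_l uniq_l _ /eqP.
by rewrite nth_uniq ?size_l // => /eqP/val_inj.
Qed.

Definition edge_words l := [seq map (nth 0 l) t | t <- K4e_triples].

Definition covers w l := has (perm_eq w) (edge_words l).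

Lemma mem_block_of_edges l T : valid_block l -> #|T| = 3 ->
  (T \in block_edges (block_of l)) = covers (map val (enum T)) l.
Proof.
move=> l_ok T3; rewrite mem_block_edges /covers has_map.
apply: eq_in_has => t /K4e_triples_wf/and3P[/eqP size_t _ /allP t_5] /=.
rewrite eq_sym set_seq_eqE ?size_map ?size_t // perm_sym.
have -> : map (nth 0 l) t = map val (map (block_of l \o inord) t).
  rewrite -map_comp; apply/eq_in_map => i /t_5 i_5 /=.
  by rewrite block_ofE // inordK.
by apply/idP/idP => [/(perm_map val) | /(perm_map_inj val_inj)].
Qed.

Definition hole s : {set 'I_v} := [set i : 'I_v | i < s].

Lemma card_hole s : s <= v -> #|hole s| = s.
Proof.
move=> s_v; have -> : hole s = widen_ord s_v @: [set: 'I_s].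
  apply/setP => i; rewrite inE; apply/idP/imsetP => [i_s | [j _ -> /=]].
    by exists (Ordinal i_s); last exact: val_inj.
  exact: ltn_ord.
by rewrite card_imset ?cardsT ?card_ord // => i j [] /val_inj.
Qed.

Lemma subset_holeE s T : (T \subset hole s) = all (gtn s) (map val (enum T)).
Proof.
apply/subsetP/allP => [T_s _ /mapP[i i_T ->] | w_s i i_T].
  by move: i_T; rewrite mem_enum => /T_s; rewrite inE.
by rewrite inE; apply: w_s; apply/mapP; exists i; rewrite ?mem_enum.
Qed.

Definition HS_certificate s (L : seq (seq nat)) :=
  all valid_block L &&
  all (fun w => count (covers w) L == ~~ all (gtn s) w)
      [seq w <- words v 3 | sorted ltn w].

Lemma HS_of_certificate s L :
  s <= v -> HS_certificate s L -> is_HS s (hole s) (map block_of L).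
Proof.
move=> s_v /andP[/allP L_ok /allP L_covers]; split; first exact: card_hole.
  by rewrite all_map; apply/allP => l /L_ok l_ok; apply/injectiveP/block_of_inj.
move=> T; rewrite count_map; have [T3 | T_not3] := eqVneq #|T| 3; last first.
  apply/eqP; rewrite eqn0Ngt -has_count; apply/hasPn => l /L_ok l_ok.
  by apply: contra T_not3 => /(card_block_edge (block_of_inj l_ok))/eqP.
set w := map val (enum T).
have w_words : w \in words v 3.
  rewrite mem_words size_map -cardE T3 /=.
  by apply/allP => _ /mapP[i _ ->]; exact: ltn_ord.
rewrite (@eq_in_count _ _ (covers w)) => [|l /L_ok l_ok]; last exact: mem_block_of_edges.
by rewrite subset_holeE; apply/eqP/L_covers; rewrite mem_filter sorted_val_enum.
Qed.

End Blocks.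

Definition blocks_16_6 : seq (seq nat) := [::
  [:: 1; 8; 0; 6; 14];
  [:: 1; 14; 0; 10; 13];
  [:: 5; 11; 0; 13; 1];
  [:: 0; 6; 2; 11; 4];
  [:: 8; 15; 0; 2; 7];
  [:: 0; 2; 9; 13; 8];
  [:: 6; 7; 2; 10; 0];
  [:: 2; 12; 0; 14; 15];
  [:: 3; 10; 0; 6; 7];
  [:: 0; 7; 3; 14; 13];
  [:: 5; 7; 2; 9; 1];
  [:: 0; 9; 3; 15; 2];
  [:: 12; 13; 0; 3; 11];
  [:: 0; 4; 6; 12; 15];
  [:: 7; 13; 0; 4; 11];
  [:: 0; 9; 4; 8; 5];
  [:: 0; 15; 4; 10; 6];
  [:: 8; 15; 4; 14; 0];
  [:: 2; 12; 4; 7; 1];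
  [:: 0; 8; 5; 7; 14];
  [:: 10; 12; 0; 9; 5];
  [:: 7; 11; 0; 10; 5];
  [:: 0; 12; 5; 15; 7];
  [:: 9; 11; 0; 14; 5];
  [:: 8; 14; 6; 9; 0];
  [:: 0; 13; 6; 15; 7];
  [:: 2; 4; 6; 13; 1];
  [:: 11; 13; 6; 14; 1];
  [:: 4; 13; 9; 11; 1];
  [:: 0; 11; 8; 12; 4];
  [:: 0; 13; 8; 14; 11];
  [:: 2; 9; 3; 6; 12];
  [:: 3; 12; 2; 10; 11];
  [:: 4; 8; 2; 10; 13];
  [:: 4; 9; 2; 15; 7];
  [:: 5; 12; 4; 14; 2];
  [:: 2; 14; 5; 6; 7];
  [:: 2; 5; 8; 13; 10];
  [:: 5; 10; 2; 15; 11];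
  [:: 2; 11; 5; 12; 9];
  [:: 2; 12; 6; 8; 10];
  [:: 13; 15; 2; 14; 7];
  [:: 8; 11; 2; 9; 12];
  [:: 2; 14; 9; 10; 4];
  [:: 6; 14; 10; 15; 3];
  [:: 5; 6; 4; 11; 10];
  [:: 4; 7; 8; 11; 6];
  [:: 7; 9; 4; 14; 10];
  [:: 4; 15; 11; 12; 6];
  [:: 6; 10; 12; 13; 4];
  [:: 7; 8; 6; 13; 9];
  [:: 6; 11; 9; 15; 13];
  [:: 8; 12; 13; 15; 7];
  [:: 12; 14; 10; 11; 8];
  [:: 0; 9; 1; 7; 15];
  [:: 0; 15; 1; 11; 12];
  [:: 4; 10; 1; 12; 0];
  [:: 1; 7; 3; 10; 5];
  [:: 9; 14; 1; 3; 6];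
  [:: 1; 3; 8; 12; 9];
  [:: 7; 6; 3; 11; 1];
  [:: 3; 13; 1; 15; 14];
  [:: 2; 11; 1; 7; 6];
  [:: 1; 6; 2; 15; 12];
  [:: 4; 6; 3; 8; 0];
  [:: 1; 8; 2; 14; 3];
  [:: 13; 12; 1; 2; 10];
  [:: 1; 5; 7; 13; 14];
  [:: 6; 12; 1; 5; 10];
  [:: 1; 8; 5; 9; 4];
  [:: 1; 14; 5; 11; 7];
  [:: 9; 14; 5; 15; 1];
  [:: 3; 13; 5; 6; 0];
  [:: 1; 9; 4; 6; 15];
  [:: 11; 13; 1; 8; 4];
  [:: 6; 10; 1; 11; 4];
  [:: 1; 13; 4; 14; 6];
  [:: 8; 10; 1; 15; 4];
  [:: 9; 15; 7; 8; 1];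
  [:: 1; 12; 7; 14; 6];
  [:: 3; 5; 7; 12; 0];
  [:: 10; 12; 7; 15; 0];
  [:: 5; 12; 8; 10; 0];
  [:: 1; 10; 9; 13; 5];
  [:: 1; 12; 9; 15; 10];
  [:: 3; 8; 2; 7; 13];
  [:: 2; 13; 3; 11; 10];
  [:: 5; 9; 3; 11; 12];
  [:: 5; 8; 3; 14; 6];
  [:: 4; 13; 5; 15; 3];
  [:: 3; 15; 4; 7; 6];
  [:: 3; 4; 9; 12; 11];
  [:: 4; 11; 3; 14; 10];
  [:: 3; 10; 4; 13; 8];
  [:: 3; 13; 7; 9; 11];
  [:: 12; 14; 3; 15; 6];
  [:: 9; 10; 3; 8; 13];
  [:: 3; 15; 8; 11; 5];
  [:: 7; 15; 11; 14; 2];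
  [:: 4; 7; 5; 10; 11];
  [:: 5; 6; 9; 10; 7];
  [:: 6; 8; 5; 15; 11];
  [:: 5; 14; 10; 13; 7];
  [:: 7; 11; 13; 12; 5];
  [:: 6; 9; 7; 12; 8];
  [:: 7; 10; 8; 14; 12];
  [:: 9; 13; 12; 14; 6];
  [:: 13; 15; 11; 10; 9]].

Lemma blocks_16_6_certificate : HS_certificate 15 6 blocks_16_6.
Proof. by vm_compute. Qed.

Theorem lemma3p8 :
  exists (H : {set 'I_16}) (B : seq {ffun 'I_5 -> 'I_16}), is_HS 6 H B.
Proof.
exists (hole 15 6), (map (block_of 15) blocks_16_6).
(* With the bound left as [_], [exact:] unfolds the certificate during unification. *)
exact: HS_of_certificate (isT : 6 <= 16) blocks_16_6_certificate.
Qed.
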